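(* Let $n \ge 1$ and $A, B \in \mathrm{SPD}(n)$. Let $\Phi:\mathrm{SPD}(n)\to \mathbf{S}^\infty$ be the map defined in the context, and set $\widetilde f = \Phi(A)$, $\widetilde g = \Phi(B)$. Then $$ d(2A, 2B) = d_S(\widetilde f, \widetilde g), $$ where $d$ is the Stein metric on $\mathrm{SPD}(n)$ and $d_S$ is the function on $\mathbf{S}^\infty$ defined in the context. In other words, $A \mapsto \Phi(A/2)$ is an isometry from $(\mathrm{SPD}(n), d)$ onto its image in $(\mathbf{S}^\infty, d_S)$.
   Context: $\mathrm{SPD}(n)$ denotes the set of $n\times n$ real symmetric positive definite matrices. The Stein metric on $\mathrm{SPD}(n)$ is $$ d(A,B) = \sqrt{\log\det\!\Big(\tfrac{A+B}{2}\Big) - \tfrac12 \log\det(AB)}. $$ For $A \in \mathrm{SPD}(n)$, let $f_A:\mathbb{R}^n\to\mathbb{R}$ be the density of the Gaussian distribution with mean $\mathbf{0}$ and covariance matrix $A$, viewed as an element of $L^2(\mathbb{R}^n)$. Let $\mathbf{S}^\infty$ denote the unit sphere of $L^2(\mathbb{R}^n)$, and define $\Phi(A) = f_A/\|f_A\|_{L^2}$. For $\widetilde f, \widetilde g \in \mathbf{S}^\infty$ with $\langle \widetilde f, \widetilde g\rangle \neq 0$ define $$ d_S(\widetilde f, \widetilde g) = \sqrt{-\log \langle \widetilde f, \widetilde g\rangle^2}, $$ where $\langle\cdot,\cdot\rangle$ is the $L^2$ inner product. *)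

From Stdlib Require Import Reals Lra.
Open Scope R_scope.

(* Real n x n matrices are represented as functions nat -> nat -> R, of which
   only the entries with indices < n are relevant; vectors of R^n as nat -> R. *)
Definition Mat := nat -> nat -> R.
Definition Vec := nat -> R.

Fixpoint rsum (n : nat) (f : nat -> R) : R :=
  match n with O => 0 | S m => rsum m f + f m end.

Definition minor0 (A : Mat) (j : nat) : Mat :=
  fun i k => A (S i) (if (k <? j)%nat then k else S k).

Fixpoint det (n : nat) (A : Mat) : R :=
  match n with
  | O => 1
  | S m => rsum (S m) (fun j => (-1) ^ j * A O j * det m (minor0 A j))
  end.

Definition madd (A B : Mat) : Mat := fun i j => A i j + B i j.
Definition mscale (c : R) (A : Mat) : Mat := fun i j => c * A i j.

Definition quad (n : nat) (A : Mat) (x : Vec) : R :=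
  rsum n (fun i => rsum n (fun j => x i * A i j * x j)).

Definition SPD (n : nat) (A : Mat) : Prop :=
  (forall i j, (i < n)%nat -> (j < n)%nat -> A i j = A j i) /\
  (forall x : Vec, (exists i, (i < n)%nat /\ x i <> 0) -> 0 < quad n A x).

Definition is_inverse (n : nat) (A Ainv : Mat) : Prop :=
  forall i j, (i < n)%nat -> (j < n)%nat ->
    rsum n (fun k => A i k * Ainv k j) = if Nat.eqb i j then 1 else 0.

Definition stein (n : nat) (A B : Mat) : R :=
  sqrt (ln (det n (mscale (/2) (madd A B))) - / 2 * ln (det n A * det n B)).

(* Gaussian density with mean 0 and covariance A (Ainv = A^{-1}) *)
Definition gauss (n : nat) (A Ainv : Mat) (x : Vec) : R :=
  exp (- / 2 * quad n Ainv x) / sqrt ((2 * PI) ^ n * det n A).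

Definition improper_integral (f : R -> R) (l : R) : Prop :=
  (forall a b : R, inhabited (Riemann_integrable f a b)) /\
  (forall eps : R, 0 < eps -> exists M : R, forall a b : R,
      a <= - M -> M <= b -> forall pr : Riemann_integrable f a b,
      Rabs (RiemannInt pr - l) < eps).

Definition vcons (t : R) (y : Vec) : Vec :=
  fun i => match i with O => t | S k => y k end.

(* integral_Rn n F l : the (iterated improper Riemann) integral of F over R^n
   exists and equals l. *)
Fixpoint integral_Rn (n : nat) (F : Vec -> R) (l : R) : Prop :=
  match n with
  | O => l = F (fun _ => 0)
  | S m => exists G : R -> R,
      (forall t, integral_Rn m (fun y => F (vcons t y)) (G t)) /\
      improper_integral G l
  end.

(* d_S on the unit sphere, in terms of the inner product ip = <f~, g~> *)
Definition dS_of_inner (ip : R) : R := sqrt (- ln (ip ^ 2)).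

(* Completing the square in the first coordinate (a Schur complement) shows, by
   induction on n, that the integral of exp (-1/2 x^T M x) over R^n is
   kappa^n / sqrt (det M) for every SPD matrix M, where kappa is the integral of
   exp (-t^2/2) over R.  The product f_A f_B is a multiple of the Gaussian with
   precision A^-1 + B^-1, and det A * det B * det (A^-1 + B^-1) = det (A + B), so
   <f_A, f_B> = kappa^n / ((2 PI)^n sqrt (det (A + B))).  Therefore
   <Phi A, Phi B>^2 = sqrt (det (2A) * det (2B)) / det (A + B), and minus its
   logarithm is d(2A, 2B)^2 since (2A + 2B)/2 = A + B. *)

From Stdlib Require Import Reals Lra Lia FunctionalExtensionality.
From mathcomp Require all_boot all_order all_algebra Rstruct.
From Coquelicot Require Coquelicot.
Open Scope R_scope.

Definition is_symmetric (n : nat) (M : Mat) : Prop :=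
  forall i j, (i < n)%nat -> (j < n)%nat -> M i j = M j i.

Definition minor00 (M : Mat) : Mat := fun i j => M (S i) (S j).

Definition solves_col0 (m : nat) (M : Mat) (w : Vec) : Prop :=
  forall i, (i < m)%nat -> rsum m (fun k => M (S i) (S k) * w k) = M (S i) O.

Definition schur_compl (m : nat) (M : Mat) (w : Vec) : R :=
  M O O - rsum m (fun k => M O (S k) * w k).

Module Determinant.
Import all_boot all_order all_algebra Rstruct.
Import GRing.Theory Num.Theory.

Definition mx n (A : Mat) : 'M[R]_n := \matrix_(i < n, j < n) A i j.

Lemma rsumE n f : rsum n f = (\sum_(i < n) f i)%R.
Proof.
elim: n => [|n IH] /=; first by rewrite big_ord0.
by rewrite big_ord_recr /= IH.
Qed.

Lemma minor0_index (j k : nat) : (if (k <? j)%nat then k else S k) = bump j k.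
Proof.
rewrite /bump; case: (Nat.ltb_spec k j) => [/ltP | /leP] H.
- by rewrite leqNgt H.
- by rewrite H.
Qed.

Lemma det_mxE n A : det n A = (\det (mx n A))%R.
Proof.
elim: n A => [|n IH] A; first by rewrite /= det_mx00.
change (rsum n.+1 (fun j => (-1) ^ j * A O j * det n (minor0 A j))
  = (\det (mx n.+1 A))%R).
rewrite (expand_det_row _ ord0) rsumE.
apply: eq_bigr => j _.
rewrite IH /cofactor RpowE !mxE /= add0n !RmultE mulrA.
congr (_ * _)%R; first by rewrite mulrC.
by congr (determinant _); apply/matrixP => i k; rewrite !mxE /minor0 minor0_index.
Qed.

Lemma lift0_eq0 (m : nat) (k : 'I_m) : (lift ord0 k == ord0) = false.
Proof. by apply/negbTE; rewrite eq_sym neq_lift. Qed.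

Definition col0_below m (w : Vec) : 'M[R]_m.+1 :=
  (\matrix_(i, j) (if (j == ord0) && (i != ord0) then w i.-1 else 0))%R.

Lemma det_1_sub_col0_below m w : (\det (1%:M - col0_below m w) = 1)%R.
Proof.
rewrite (expand_det_row _ ord0) big_ord_recl big1 ?addr0.
- rewrite /cofactor !mxE /= subr0 expr0 !mul1r -[RHS](det1 R m).
  congr (determinant _); apply/matrixP => i j; rewrite !mxE.
  by rewrite (inj_eq lift_inj) lift0_eq0 subr0.
- by move=> j _; rewrite !mxE lift0_eq0 eq_sym lift0_eq0 /= subr0 mul0r.
Qed.

(* Right multiplication by [1 - col0_below m w] subtracts
   [\sum_k M i (S k) * w k] from column 0; when [w] solves the lower block
   system this clears column 0 below the corner, which is left holding the
   Schur complement. *)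
Lemma det_schur m (M : Mat) (w : Vec) :
  solves_col0 m M w -> det (S m) M = schur_compl m M w * det m (minor00 M).
Proof.
move=> Hw; rewrite !det_mxE.
set N := mx m.+1 M; set E := col0_below m w.
have NE0 i : ((N *m E) i ord0 = \sum_(k < m) M i (S k) * w k)%R.
  rewrite !mxE big_ord_recl !mxE eqxx /= mulr0 add0r.
  by apply: eq_bigr => k _; rewrite !mxE eqxx lift0_eq0.
have NEl i (j : 'I_m) : ((N *m E) i (lift ord0 j) = 0)%R.
  by rewrite !mxE big1 // => k _; rewrite !mxE lift0_eq0 /= mulr0.
have DE i j : ((N - N *m E) i j = N i j - (N *m E) i j)%R.
  by rewrite [LHS]mxE [X in (_ + X)%R]mxE.
rewrite -[(\det N)%R]mulr1 -(det_1_sub_col0_below m w) -/E -det_mulmx.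
rewrite mulmxBr mulmx1 (expand_det_col _ ord0) big_ord_recl big1 ?addr0.
- rewrite /cofactor DE NE0 /= expr0 mul1r /schur_compl rsumE RmultE !mxE.
  congr (_ * _)%R; congr (determinant _); apply/matrixP => i j.
  by rewrite !mxE big1 ?subr0 // => k _; rewrite /E !mxE lift0_eq0 /= mulr0.
- move=> i _; rewrite DE NE0 !mxE lift0.
  rewrite (_ : (\sum_(k < m) _)%R = M i.+1 O) ?subrr ?mul0r //.
  by rewrite -(rsumE m (fun k => M i.+1 k.+1 * w k)); apply: Hw; apply/ltP.
Qed.

Definition rowv n (x : Vec) : 'rV[R]_n := (\row_j x j)%R.
Definition vrow {n} (y : 'rV[R]_n) : Vec :=
  fun k => oapp (fun j => y 0%R j) 0 (insub k).

Lemma vrowE n (y : 'rV[R]_n) (j : 'I_n) : vrow y j = y 0%R j.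
Proof. by rewrite /vrow valK. Qed.

Lemma rowv_vrow n (y : 'rV[R]_n) : rowv n (vrow y) = y.
Proof. by apply/rowP => j; rewrite mxE vrowE. Qed.

Lemma quad_mx n N x : quad n N x = ((rowv n x *m mx n N *m (rowv n x)^T) 0 0)%R.
Proof.
rewrite /quad rsumE mxE.
under eq_bigr => i _ do rewrite rsumE.
rewrite exchange_big /=; apply: eq_bigr => j _.
by rewrite !mxE mulr_suml; apply: eq_bigr => i _; rewrite !mxE.
Qed.

Lemma rowv_neq0 {n} {x : Vec} : (exists i, lt i n /\ x i <> 0) -> rowv n x != 0%R.
Proof.
move=> [i [/ltP Hi Hx]]; apply/rV0Pn.
by exists (Ordinal Hi); rewrite mxE; apply/eqP.
Qed.

Lemma vrow_neq0 {n} {y : 'rV[R]_n} : y != 0%R -> exists i, lt i n /\ vrow y i <> 0.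
Proof.
move/rV0Pn => [j Hj]; exists j; split; first by apply/ltP.
by rewrite vrowE; apply/eqP.
Qed.

Section PositiveDefinite.
Variables (n : nat) (N : Mat).
Hypothesis N_pd : forall x : Vec, (exists i, lt i n /\ x i <> 0) -> 0 < quad n N x.

Lemma posdef_unitmx : mx n N \in unitmx.
Proof.
rewrite unitmxE unitfE; apply/negP => /det0P [v Hv HvN].
have := N_pd (vrow v) (vrow_neq0 Hv).
by rewrite quad_mx rowv_vrow HvN mul0mx mxE; apply: Rlt_irrefl.
Qed.

Lemma posdef_solve (b : Vec) :
  exists w : Vec, forall i, lt i n -> rsum n (fun k => N i k * w k) = b i.
Proof.
pose wc : 'cV[R]_n := (invmx (mx n N) *m \col_i b i)%R.
exists (vrow wc^T) => i /ltP Hi.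
have := congr1 (fun M : 'cV[R]_n => M (Ordinal Hi) 0%R)
  (mulKVmx posdef_unitmx (\col_i b i))%R.
rewrite !mxE /= => <-; rewrite rsumE; apply: eq_bigr => k _.
by rewrite vrowE !mxE.
Qed.

End PositiveDefinite.

Section Inverse.
Variables (n : nat) (A Ainv : Mat).
Hypothesis A_Ainv : is_inverse n A Ainv.

Lemma mulmx_inverse : (mx n A *m mx n Ainv = 1%:M)%R.
Proof.
apply/matrixP => i j; rewrite !mxE.
have := A_Ainv i j (ltP (ltn_ord i)) (ltP (ltn_ord j)); rewrite rsumE => HA.
rewrite (eq_bigr (fun k : 'I_n => A i k * Ainv k j)); last by move=> k _; rewrite !mxE.
rewrite HA; case: (Nat.eqb_spec i j) => [/val_inj -> | Hne]; first by rewrite eqxx.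
by case: eqP => // Eij; case: Hne; rewrite Eij.
Qed.

Lemma trmx_mx_sym : is_symmetric n A -> ((mx n A)^T = mx n A)%R.
Proof. by move=> HS; apply/matrixP => i j; rewrite !mxE HS //; apply/ltP. Qed.

Hypothesis A_spd : SPD n A.

Lemma trmx_mx_inverse : ((mx n Ainv)^T = mx n Ainv)%R.
Proof.
have HT := trmx_mx_sym (proj1 A_spd).
rewrite -[LHS]mulmx1 -mulmx_inverse mulmxA -{1}HT -trmx_mul mulmx_inverse trmx1.
by rewrite mul1mx.
Qed.

Lemma inverse_SPD : SPD n Ainv.
Proof.
split.
- move=> i j /ltP Hi /ltP Hj.
  have := congr1 (fun M : 'M[R]_n => M (Ordinal Hi) (Ordinal Hj)) trmx_mx_inverse.
  by rewrite !mxE /= => ->.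
- move=> x Hx; set X := rowv n x; set y := (X *m mx n Ainv)%R.
  have Xy : (y *m mx n A = X)%R by rewrite /y -mulmxA (mulmx1C mulmx_inverse) mulmx1.
  have yn : y != 0%R.
    by apply: contra (rowv_neq0 Hx) => /eqP y0; rewrite -/X -Xy y0 mul0mx.
  have := proj2 A_spd (vrow y) (vrow_neq0 yn).
  rewrite !quad_mx rowv_vrow -/X Xy /y trmx_mul trmx_mx_inverse mulmxA.
  by [].
Qed.

End Inverse.
Arguments mulmx_inverse {n A Ainv}.

Lemma det_madd_inverse n A Ainv B Binv :
  is_inverse n A Ainv -> is_inverse n B Binv ->
  det n (madd A B) = det n A * det n B * det n (madd Ainv Binv).
Proof.
move=> HA HB.
have mx_madd C D : mx n (madd C D) = (mx n C + mx n D)%R.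
  by apply/matrixP => i j; rewrite !mxE.
have E : (mx n A *m mx n (madd Ainv Binv) *m mx n B = mx n (madd A B))%R.
  rewrite !mx_madd mulmxDr mulmxDl (mulmx_inverse HA) mul1mx -mulmxA.
  by rewrite (mulmx1C (mulmx_inverse HB)) mulmx1 addrC.
by rewrite !det_mxE -E !det_mulmx !RmultE mulrAC.
Qed.

End Determinant.

Module GaussianIntegral.
Import Coquelicot.

Lemma exp_le x y : x <= y -> exp x <= exp y.
Proof. intros [H|H]; [left; apply exp_increasing; auto | rewrite H; lra]. Qed.

Definition kernel (t : R) : R := exp (- / 2 * t ^ 2).

Lemma ex_RInt_kernel a b : ex_RInt kernel a b.
Proof.
apply (ex_RInt_continuous (V:=R_CompleteNormedModule)); intros t _.
apply (ex_derive_continuous (K:=R_AbsRing) (V:=R_NormedModule)); unfold kernel.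
auto_derive; auto.
Qed.

Lemma RInt_kernel_Chasles a b c : RInt kernel a b + RInt kernel b c = RInt kernel a c.
Proof. apply (RInt_Chasles (V:=R_CompleteNormedModule) kernel); apply ex_RInt_kernel. Qed.

Lemma RInt_kernel_ge0 a b : a <= b -> 0 <= RInt kernel a b.
Proof.
intros H; apply RInt_ge_0; auto; [apply ex_RInt_kernel|].
intros; left; apply exp_pos.
Qed.

(* On [1, +oo) the kernel is dominated by [exp (-t/2)], whose primitive is explicit. *)
Lemma RInt_kernel_tail x y : 1 <= x <= y -> RInt kernel x y <= 2 * exp (- x / 2).
Proof.
intros [H1 H2].
assert (Hprim : RInt (fun t => exp (- / 2 * t)) x y
                = - 2 * exp (- / 2 * y) - - 2 * exp (- / 2 * x)).
{ apply (is_RInt_unique (V:=R_CompleteNormedModule)).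
  apply (is_RInt_derive (V:=R_CompleteNormedModule) (fun t => - 2 * exp (- / 2 * t))).
  - intros t _; auto_derive; auto; field.
  - intros t _; apply (ex_derive_continuous (K:=R_AbsRing) (V:=R_NormedModule)).
    auto_derive; auto. }
apply Rle_trans with (RInt (fun t => exp (- / 2 * t)) x y).
- apply RInt_le; auto; [apply ex_RInt_kernel| |].
  + apply (ex_RInt_continuous (V:=R_CompleteNormedModule)); intros t _.
    apply (ex_derive_continuous (K:=R_AbsRing) (V:=R_NormedModule)); auto_derive; auto.
  + intros t Ht; unfold kernel; apply exp_le; simpl; nra.
- rewrite Hprim; assert (0 < exp (- / 2 * y)) by apply exp_pos.
  replace (- x / 2) with (- / 2 * x) by field; lra.
Qed.

Definition half_mass_upto (b : R) : R := RInt kernel 0 b.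

Lemma half_mass_upto_le a b : a <= b -> half_mass_upto a <= half_mass_upto b.
Proof.
intros H; unfold half_mass_upto; rewrite <- (RInt_kernel_Chasles 0 a b).
assert (0 <= RInt kernel a b) by (apply RInt_kernel_ge0; auto); lra.
Qed.

Lemma half_mass_upto_1_gt0 : 0 < half_mass_upto 1.
Proof.
apply Rlt_le_trans with (RInt (fun _ => exp (- / 2)) 0 1).
- rewrite (RInt_const (V:=R_CompleteNormedModule)).
  unfold scal; simpl; unfold mult; simpl.
  assert (0 < exp (- / 2)) by apply exp_pos; lra.
- apply RInt_le; try lra; [apply ex_RInt_const | apply ex_RInt_kernel |].
  intros t Ht; unfold kernel; apply exp_le; simpl; nra.
Qed.

Definition half_masses (y : R) : Prop := exists b, 0 <= b /\ y = half_mass_upto b.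

Lemma half_masses_bound : bound half_masses.
Proof.
exists (half_mass_upto 1 + 2); intros y [b [Hb ->]].
destruct (Rle_dec b 1) as [H|H].
- assert (half_mass_upto b <= half_mass_upto 1) by (apply half_mass_upto_le; auto); lra.
- unfold half_mass_upto; rewrite <- (RInt_kernel_Chasles 0 1 b).
  assert (RInt kernel 1 b <= 2 * exp (- 1 / 2)) by (apply RInt_kernel_tail; lra).
  assert (exp (- 1 / 2) <= exp 0) by (apply exp_le; lra).
  rewrite exp_0 in *; fold (half_mass_upto 1); lra.
Qed.

(* [half_mass] is [RInt kernel 0 +oo], obtained as a supremum. *)
Definition half_mass : R :=
  proj1_sig (completeness half_masses half_masses_bound
    (ex_intro _ (half_mass_upto 0) (ex_intro _ 0 (conj (Rle_refl 0) eq_refl)))).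

Lemma half_mass_lub : is_lub half_masses half_mass.
Proof. unfold half_mass; destruct completeness; auto. Qed.

Lemma half_mass_approx b :
  1 <= b -> half_mass_upto b <= half_mass /\ half_mass - half_mass_upto b <= 2 * exp (- b / 2).
Proof.
intros Hb; destruct half_mass_lub as [Hub Hleast]; split.
- apply Hub; exists b; split; auto; lra.
- assert (half_mass <= half_mass_upto b + 2 * exp (- b / 2)); [|lra].
  apply Hleast; intros y [b' [Hb' ->]].
  destruct (Rle_dec b' b) as [H|H].
  + assert (half_mass_upto b' <= half_mass_upto b) by (apply half_mass_upto_le; auto).
    assert (0 < exp (- b / 2)) by apply exp_pos; lra.
  + unfold half_mass_upto; rewrite <- (RInt_kernel_Chasles 0 b b').
    assert (RInt kernel b b' <= 2 * exp (- b / 2)) by (apply RInt_kernel_tail; lra); lra.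
Qed.

Lemma RInt_kernel_neg a : RInt kernel a 0 = half_mass_upto (- a).
Proof.
unfold half_mass_upto.
assert (H := RInt_comp_lin (V:=R_CompleteNormedModule) kernel (-1) 0 a 0).
replace (-1 * a + 0) with (- a) in H by ring.
replace (-1 * 0 + 0) with 0 in H by ring.
rewrite <- (opp_RInt_swap (V:=R_CompleteNormedModule) kernel (- a) 0) by apply ex_RInt_kernel.
rewrite <- H by apply ex_RInt_kernel.
rewrite <- (RInt_opp (V:=R_CompleteNormedModule)).
2:{ apply (ex_RInt_continuous (V:=R_CompleteNormedModule)); intros.
    apply (ex_derive_continuous (K:=R_AbsRing) (V:=R_NormedModule)).
    unfold kernel, scal; simpl; unfold mult; simpl; auto_derive; auto. }
apply (RInt_ext (V:=R_CompleteNormedModule)); intros x _.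
unfold scal, opp; simpl; unfold mult; simpl; unfold kernel.
replace ((-1 * x + 0) ^ 2) with (x ^ 2) by ring; ring.
Qed.

Definition mass : R := 2 * half_mass.

Lemma mass_gt0 : 0 < mass.
Proof.
unfold mass; destruct half_mass_lub as [Hub _].
assert (half_mass_upto 1 <= half_mass) by (apply Hub; exists 1; split; auto; lra).
pose proof half_mass_upto_1_gt0; lra.
Qed.

Definition RInt_converges (f : R -> R) (l : R) : Prop :=
  forall eps, 0 < eps -> exists M, forall a b, a <= - M -> M <= b ->
    Rabs (RInt f a b - l) < eps.

Lemma RInt_kernel_converges : RInt_converges kernel mass.
Proof.
intros eps He.
exists (Rmax 1 (2 * ln (4 / eps) + 2)); intros a b Ha Hb.
set (M := Rmax 1 (2 * ln (4 / eps) + 2)) in *.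
assert (1 <= M) by apply Rmax_l.
assert (2 * ln (4 / eps) + 2 <= M) by apply Rmax_r.
rewrite <- (RInt_kernel_Chasles a 0 b), RInt_kernel_neg.
destruct (half_mass_approx (- a)) as [Hn1 Hn2]; [lra|].
destruct (half_mass_approx b) as [Hp1 Hp2]; [lra|].
assert (exp (- - a / 2) <= exp (- M / 2)) by (apply exp_le; lra).
assert (exp (- b / 2) <= exp (- M / 2)) by (apply exp_le; lra).
assert (exp (- M / 2) < eps / 4).
{ apply Rle_lt_trans with (exp (- ln (4 / eps) - 1)); [apply exp_le; lra|].
  apply Rlt_le_trans with (exp (- ln (4 / eps))); [apply exp_increasing; lra|].
  rewrite exp_Ropp, exp_ln by (apply Rdiv_lt_0_compat; lra).
  right; field; lra. }
fold (half_mass_upto b); unfold mass.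
unfold Rabs; destruct Rcase_abs; lra.
Qed.

Lemma RInt_converges_affine f l C q s :
  0 < q -> (forall a b, ex_RInt f a b) -> RInt_converges f l ->
  RInt_converges (fun t => C * f (q * (t - s))) (C * l / q).
Proof.
intros Hq Hex Hf eps He.
assert (HC : 0 < Rabs C + 1) by (pose proof (Rabs_pos C); lra).
destruct (Hf (eps * q / (Rabs C + 1))) as [M HM].
{ apply Rdiv_lt_0_compat; auto; apply Rmult_lt_0_compat; auto. }
exists (Rabs s + Rabs M / q); intros a b Ha Hb.
assert (Hsubst : RInt (fun t => C * f (q * (t - s))) a b
                 = C / q * RInt f (q * a + - (q * s)) (q * b + - (q * s))).
{ rewrite <- (RInt_comp_lin (V:=R_CompleteNormedModule) f q (- (q * s)) a b) by apply Hex.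
  rewrite <- (RInt_scal (V:=R_CompleteNormedModule)).
  - apply (RInt_ext (V:=R_CompleteNormedModule)); intros x _.
    unfold scal; simpl; unfold mult; simpl.
    replace (q * x + - (q * s)) with (q * (x - s)) by ring; field; lra.
  - apply (ex_RInt_comp_lin (V:=R_CompleteNormedModule) f q (- (q * s)) a b); apply Hex. }
assert (Hlo : q * a + - (q * s) <= - M).
{ assert (q * (a - s) <= q * - (Rabs M / q)).
  { apply Rmult_le_compat_l; [lra|]; pose proof (Rle_abs (- s)); rewrite Rabs_Ropp in *; lra. }
  replace (q * - (Rabs M / q)) with (- Rabs M) in * by (field; lra).
  pose proof (Rle_abs M); lra. }
assert (Hhi : M <= q * b + - (q * s)).
{ assert (q * (Rabs M / q) <= q * (b - s)).
  { apply Rmult_le_compat_l; [lra|]; pose proof (Rle_abs s); lra. }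
  replace (q * (Rabs M / q)) with (Rabs M) in * by (field; lra).
  pose proof (Rle_abs M); lra. }
specialize (HM _ _ Hlo Hhi).
rewrite Hsubst.
set (I := RInt f (q * a + - (q * s)) (q * b + - (q * s))) in *.
replace (C / q * I - C * l / q) with (C / q * (I - l)) by (field; lra).
rewrite Rabs_mult, Rabs_div, (Rabs_right q) by lra.
pose proof (Rabs_pos C).
apply Rle_lt_trans with (Rabs C / q * (eps * q / (Rabs C + 1))).
- apply Rmult_le_compat_l; [apply Rdiv_le_0_compat|]; lra.
- replace (Rabs C / q * (eps * q / (Rabs C + 1))) with (eps * (Rabs C / (Rabs C + 1)))
    by (field; lra).
  assert (Rabs C / (Rabs C + 1) < 1).
  { apply (Rmult_lt_reg_r (Rabs C + 1)); auto.
    unfold Rdiv; rewrite Rmult_assoc, Rinv_l by lra; lra. }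
  nra.
Qed.

Lemma improper_integral_of_RInt f l :
  (forall a b, ex_RInt f a b) -> RInt_converges f l -> improper_integral f l.
Proof.
intros Hex Hc; split.
- intros a b; constructor; apply ex_RInt_Reals_0; auto.
- intros eps He; destruct (Hc eps He) as [M HM]; exists M; intros a b Ha Hb pr.
  rewrite <- RInt_Reals; auto.
Qed.

Lemma improper_integral_gauss1 sg s C : 0 < sg ->
  improper_integral (fun t => C * exp (- / 2 * (sg * (t - s) ^ 2))) (C * mass / sqrt sg).
Proof.
intros Hsg; set (q := sqrt sg).
assert (Hq : 0 < q) by (apply sqrt_lt_R0; auto).
assert (Hq2 : q * q = sg) by (apply sqrt_sqrt; lra).
assert (Hint : (fun t => C * exp (- / 2 * (sg * (t - s) ^ 2)))
               = fun t => C * kernel (q * (t - s))).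
{ apply functional_extensionality; intro t; unfold kernel.
  rewrite <- Hq2; do 3 f_equal; ring. }
rewrite Hint; apply improper_integral_of_RInt.
- intros a b; apply (ex_RInt_continuous (V:=R_CompleteNormedModule)); intros.
  apply (ex_derive_continuous (K:=R_AbsRing) (V:=R_NormedModule)).
  unfold kernel; auto_derive; auto.
- apply RInt_converges_affine; auto; [apply ex_RInt_kernel | apply RInt_kernel_converges].
Qed.

End GaussianIntegral.

Lemma rsum_ext n f g : (forall i, (i < n)%nat -> f i = g i) -> rsum n f = rsum n g.
Proof.
induction n as [|n IH]; intros H; simpl; auto.
rewrite IH, (H n); auto; intros; apply H; lia.
Qed.

Lemma rsum_plus n f g : rsum n (fun i => f i + g i) = rsum n f + rsum n g.
Proof. induction n; simpl; [lra | rewrite IHn; lra]. Qed.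

Lemma rsum_scal n c f : rsum n (fun i => c * f i) = c * rsum n f.
Proof. induction n; simpl; [lra | rewrite IHn; lra]. Qed.

Lemma rsum_0 n : rsum n (fun _ => 0) = 0.
Proof. induction n; simpl; [lra | rewrite IHn; lra]. Qed.

Lemma rsum_shift n f : rsum (S n) f = f O + rsum n (fun i => f (S i)).
Proof. induction n as [|n IH]; simpl in *; [lra | rewrite IH; lra]. Qed.

Lemma rsum_swap n m F :
  rsum n (fun i => rsum m (fun j => F i j)) = rsum m (fun j => rsum n (fun i => F i j)).
Proof. induction n as [|n IH]; simpl; [rewrite rsum_0 | rewrite IH, <- rsum_plus]; auto. Qed.

Lemma quad_madd n A B x : quad n (madd A B) x = quad n A x + quad n B x.
Proof.
unfold quad, madd; rewrite <- rsum_plus; apply rsum_ext; intros i _.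
rewrite <- rsum_plus; apply rsum_ext; intros j _; ring.
Qed.

Lemma quad_0 n A : quad n A (fun _ => 0) = 0.
Proof.
unfold quad; transitivity (rsum n (fun _ => 0)); [|apply rsum_0].
apply rsum_ext; intros i _; transitivity (rsum n (fun _ => 0)); [|apply rsum_0].
apply rsum_ext; intros; ring.
Qed.

Lemma quad_vcons m M u v : is_symmetric (S m) M ->
  quad (S m) M (vcons u v) =
  M O O * u ^ 2 + 2 * u * rsum m (fun k => M O (S k) * v k) + quad m (minor00 M) v.
Proof.
intros HS; unfold quad; rewrite rsum_shift; simpl vcons; rewrite rsum_shift; simpl vcons.
rewrite (rsum_ext m (fun i => rsum (S m) (fun j => v i * M (S i) j * vcons u v j))
                     (fun i => v i * M (S i) O * u
                               + rsum m (fun j => v i * minor00 M i j * v j)))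
  by (intros i _; rewrite rsum_shift; reflexivity).
rewrite rsum_plus.
rewrite (rsum_ext m (fun i => v i * M (S i) O * u) (fun i => u * (M O (S i) * v i)))
  by (intros i Hi; rewrite (HS (S i) O) by lia; ring).
rewrite (rsum_ext m (fun j => u * M O (S j) * v j) (fun j => u * (M O (S j) * v j)))
  by (intros; ring).
rewrite !rsum_scal; ring.
Qed.

Lemma quad_shift m N u v w : is_symmetric m N ->
  quad m N (fun k => v k + u * w k) =
  quad m N v + 2 * u * rsum m (fun i => v i * rsum m (fun k => N i k * w k))
  + u ^ 2 * rsum m (fun i => w i * rsum m (fun k => N i k * w k)).
Proof.
intros HS; unfold quad.
rewrite (rsum_ext m _ (fun i => rsum m (fun j => v i * N i j * v j)
   + u * (v i * rsum m (fun k => N i k * w k))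
   + rsum m (fun j => u * (w i * N i j * v j))
   + u ^ 2 * (w i * rsum m (fun k => N i k * w k)))).
2:{ intros i _; rewrite <- !rsum_scal, <- !rsum_plus; apply rsum_ext; intros; ring. }
rewrite !rsum_plus, !rsum_scal, (rsum_swap m m (fun i j => u * (w i * N i j * v j))).
rewrite (rsum_ext m (fun j => rsum m (fun i => u * (w i * N i j * v j)))
   (fun j => u * (v j * rsum m (fun k => N j k * w k)))).
2:{ intros j Hj; rewrite <- !rsum_scal; apply rsum_ext; intros i Hi.
    rewrite (HS i j) by lia; ring. }
rewrite rsum_scal; ring.
Qed.

Lemma quad_complete_square m M w u v : is_symmetric (S m) M -> solves_col0 m M w ->
  quad (S m) M (vcons u v) =
  quad m (minor00 M) (fun k => v k + u * w k) + schur_compl m M w * u ^ 2.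
Proof.
intros HS Hw.
rewrite quad_vcons, quad_shift by (auto; intros i j Hi Hj; apply HS; lia).
unfold minor00, schur_compl.
rewrite (rsum_ext m (fun i => v i * rsum m (fun k => M (S i) (S k) * w k))
   (fun k => M O (S k) * v k)) by (intros i Hi; rewrite Hw, (HS (S i) O) by lia; ring).
rewrite (rsum_ext m (fun i => w i * rsum m (fun k => M (S i) (S k) * w k))
   (fun k => M O (S k) * w k)) by (intros i Hi; rewrite Hw, (HS (S i) O) by lia; ring).
ring.
Qed.

Lemma SPD_minor00 m M : SPD (S m) M -> SPD m (minor00 M).
Proof.
intros [HS HP]; split.
- intros i j Hi Hj; apply HS; lia.
- intros y [i [Hi Hy]].
  assert (H := HP (vcons 0 y) (ex_intro _ (S i) (conj (proj1 (Nat.succ_lt_mono i m) Hi) Hy))).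
  rewrite quad_vcons in H by auto; lra.
Qed.

Lemma SPD_solves_col0 m M : SPD (S m) M -> exists w, solves_col0 m M w.
Proof.
intros HM; destruct (SPD_minor00 m M HM) as [_ HP].
exact (Determinant.posdef_solve m (minor00 M) HP (fun i => M (S i) O)).
Qed.

Lemma schur_compl_pos m M w : SPD (S m) M -> solves_col0 m M w -> 0 < schur_compl m M w.
Proof.
intros [HS HP] Hw.
assert (H := HP (vcons 1 (fun k => - w k)) (ex_intro _ O (conj (Nat.lt_0_succ m) R1_neq_R0))).
rewrite (quad_complete_square m M w) in H by auto.
replace (fun k => - w k + 1 * w k) with (fun _ : nat => 0) in H
  by (apply functional_extensionality; intros; ring).
rewrite quad_0 in H; lra.
Qed.

Lemma det_SPD_pos m : forall M, SPD m M -> 0 < det m M.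
Proof.
induction m as [|m IH]; intros M HM; [simpl; lra|].
destruct (SPD_solves_col0 m M HM) as [w Hw].
rewrite (Determinant.det_schur m M w Hw).
apply Rmult_lt_0_compat; [apply schur_compl_pos | apply IH, SPD_minor00]; auto.
Qed.

Lemma SPD_madd n A B : SPD n A -> SPD n B -> SPD n (madd A B).
Proof.
intros [HSA HPA] [HSB HPB]; split.
- intros i j Hi Hj; unfold madd; rewrite HSA, HSB; auto.
- intros x Hx; rewrite quad_madd; specialize (HPA x Hx); specialize (HPB x Hx); lra.
Qed.

Lemma integral_Rn_ext m F G l :
  (forall x, F x = G x) -> integral_Rn m F l -> integral_Rn m G l.
Proof. intros H; replace G with F; auto; apply functional_extensionality; auto. Qed.

(* Integrate out the first coordinate after completing the square: the inner
   integral is again Gaussian (with shifted centre), and [det_schur] splits the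
   determinant accordingly. *)
Lemma integral_gauss m : forall M s C, SPD m M ->
  integral_Rn m (fun x => C * exp (- / 2 * quad m M (fun i => x i - s i)))
    (C * GaussianIntegral.mass ^ m / sqrt (det m M)).
Proof.
induction m as [|m IH]; intros M s C HM.
- simpl; unfold quad; simpl; rewrite sqrt_1, Rmult_0_r, exp_0; field.
- destruct (SPD_solves_col0 m M HM) as [w Hw].
  assert (Hsg := schur_compl_pos m M w HM Hw).
  assert (Hd := det_SPD_pos m _ (SPD_minor00 m M HM)).
  assert (0 < sqrt (det m (minor00 M))) by (apply sqrt_lt_R0; auto).
  assert (0 < sqrt (schur_compl m M w)) by (apply sqrt_lt_R0; auto).
  set (sg := schur_compl m M w) in *.
  set (Cm := C * GaussianIntegral.mass ^ m / sqrt (det m (minor00 M))).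
  exists (fun t => Cm * exp (- / 2 * (sg * (t - s O) ^ 2))); split.
  + intro t; set (e := exp (- / 2 * (sg * (t - s O) ^ 2))).
    apply integral_Rn_ext with (F := fun y => (C * e) *
       exp (- / 2 * quad m (minor00 M) (fun i => y i - (s (S i) - (t - s O) * w i)))).
    * intro y.
      replace (fun i => vcons t y i - s i) with (vcons (t - s O) (fun k => y k - s (S k)))
        by (apply functional_extensionality; intros [|i]; reflexivity).
      rewrite (quad_complete_square m M w) by (destruct HM; auto).
      replace (fun k => y k - s (S k) + (t - s O) * w k)
        with (fun i => y i - (s (S i) - (t - s O) * w i))
        by (apply functional_extensionality; intros; ring).
      unfold e; rewrite Rmult_assoc, <- exp_plus; do 2 f_equal; fold sg; ring.
    * replace (Cm * e) with (C * e * GaussianIntegral.mass ^ m / sqrt (det m (minor00 M)))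
        by (unfold Cm; field; lra).
      apply IH, SPD_minor00; auto.
  + rewrite (Determinant.det_schur m M w Hw); fold sg; rewrite sqrt_mult by lra.
    replace (C * GaussianIntegral.mass ^ S m / (sqrt sg * sqrt (det m (minor00 M))))
      with (Cm * GaussianIntegral.mass / sqrt sg) by (unfold Cm; simpl; field; lra).
    apply GaussianIntegral.improper_integral_gauss1; auto.
Qed.

(* [gauss_inner n A B] is the L^2 inner product of the centred Gaussian densities
   with covariances [A] and [B]. *)
Definition gauss_inner (n : nat) (A B : Mat) : R :=
  GaussianIntegral.mass ^ n / ((2 * PI) ^ n * sqrt (det n (madd A B))).

Lemma gauss_inner_pos n A B : SPD n A -> SPD n B -> 0 < gauss_inner n A B.
Proof.
intros HA HB; unfold gauss_inner.
pose proof GaussianIntegral.mass_gt0; pose proof PI_RGT_0.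
assert (0 < sqrt (det n (madd A B))) by (apply sqrt_lt_R0, det_SPD_pos, SPD_madd; auto).
apply Rdiv_lt_0_compat; [apply pow_lt; lra|].
apply Rmult_lt_0_compat; [apply pow_lt; lra | auto].
Qed.

Lemma integral_gauss_product n A Ainv B Binv C :
  SPD n A -> SPD n B -> is_inverse n A Ainv -> is_inverse n B Binv ->
  integral_Rn n (fun x => C * (gauss n A Ainv x * gauss n B Binv x)) (C * gauss_inner n A B).
Proof.
intros HA HB HAi HBi.
assert (HS := SPD_madd n _ _ (Determinant.inverse_SPD n A Ainv HAi HA)
                             (Determinant.inverse_SPD n B Binv HBi HB)).
pose proof (det_SPD_pos n A HA); pose proof (det_SPD_pos n B HB).
pose proof (det_SPD_pos n _ HS); pose proof PI_RGT_0.
assert (H2pi : 0 < (2 * PI) ^ n) by (apply pow_lt; lra).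
set (pA := (2 * PI) ^ n * det n A); set (pB := (2 * PI) ^ n * det n B).
assert (0 < pA) by (apply Rmult_lt_0_compat; auto).
assert (0 < pB) by (apply Rmult_lt_0_compat; auto).
assert (0 < sqrt pA) by (apply sqrt_lt_R0; auto).
assert (0 < sqrt pB) by (apply sqrt_lt_R0; auto).
assert (0 < sqrt (det n (madd Ainv Binv))) by (apply sqrt_lt_R0; auto).
assert (Hnorm : sqrt pA * sqrt pB * sqrt (det n (madd Ainv Binv))
                = (2 * PI) ^ n * sqrt (det n (madd A B))).
{ rewrite <- !sqrt_mult by (try apply Rmult_le_pos; lra).
  rewrite (Determinant.det_madd_inverse n A Ainv B Binv HAi HBi).
  replace (pA * pB * det n (madd Ainv Binv))
    with (((2 * PI) ^ n) ^ 2 * (det n A * det n B * det n (madd Ainv Binv)))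
    by (unfold pA, pB; ring).
  rewrite sqrt_mult, sqrt_pow2 by (try apply pow2_ge_0; try apply Rmult_le_pos; nra).
  reflexivity. }
apply integral_Rn_ext with (F := fun x => C / (sqrt pA * sqrt pB) *
  exp (- / 2 * quad n (madd Ainv Binv) (fun i => x i - 0))).
- intro x; unfold gauss; fold pA pB.
  replace (fun i => x i - 0) with x by (apply functional_extensionality; intros; ring).
  rewrite quad_madd, Rmult_plus_distr_l, exp_plus; field; lra.
- replace (C * gauss_inner n A B) with
    (C / (sqrt pA * sqrt pB) * GaussianIntegral.mass ^ n / sqrt (det n (madd Ainv Binv))).
  + apply integral_gauss; auto.
  + unfold gauss_inner; rewrite <- Hnorm; field; lra.
Qed.

Lemma gauss_inner_ratio n A B : SPD n A -> SPD n B ->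
  gauss_inner n A B ^ 2 / (gauss_inner n A A * gauss_inner n B B)
  = sqrt (det n (madd A A) * det n (madd B B)) / det n (madd A B).
Proof.
intros HA HB; unfold gauss_inner.
pose proof GaussianIntegral.mass_gt0; pose proof PI_RGT_0.
assert (0 < (2 * PI) ^ n) by (apply pow_lt; lra).
assert (0 < GaussianIntegral.mass ^ n) by (apply pow_lt; lra).
assert (HAB := det_SPD_pos n _ (SPD_madd n A B HA HB)).
assert (HAA := det_SPD_pos n _ (SPD_madd n A A HA HA)).
assert (HBB := det_SPD_pos n _ (SPD_madd n B B HB HB)).
assert (0 < sqrt (det n (madd A A))) by (apply sqrt_lt_R0; auto).
assert (0 < sqrt (det n (madd B B))) by (apply sqrt_lt_R0; auto).
rewrite sqrt_mult by lra.
replace (det n (madd A B)) with (sqrt (det n (madd A B)) ^ 2) at 2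
  by (apply pow2_sqrt; lra).
assert (0 < sqrt (det n (madd A B))) by (apply sqrt_lt_R0; auto).
field; repeat split; lra.
Qed.

Lemma stein_eq_dS_of_inner n A B ip :
  0 < det n A -> 0 < det n B -> 0 < det n (mscale (/ 2) (madd A B)) ->
  ip ^ 2 = sqrt (det n A * det n B) / det n (mscale (/ 2) (madd A B)) ->
  stein n A B = dS_of_inner ip.
Proof.
intros HA HB HM Hip; unfold stein, dS_of_inner; f_equal.
assert (HAB : 0 < det n A * det n B) by (apply Rmult_lt_0_compat; auto).
assert (0 < sqrt (det n A * det n B)) by (apply sqrt_lt_R0; auto).
assert (Hsq : ln (det n A * det n B) = 2 * ln (sqrt (det n A * det n B))).
{ rewrite <- (sqrt_sqrt (det n A * det n B)) at 1 by lra; rewrite ln_mult; lra. }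
rewrite Hip, Hsq; unfold Rdiv.
rewrite ln_mult, ln_Rinv by (auto; apply Rinv_0_lt_compat; auto); lra.
Qed.

Lemma mscale2_madd (A : Mat) : mscale 2 A = madd A A.
Proof.
apply functional_extensionality; intro i; apply functional_extensionality; intro j.
unfold mscale, madd; ring.
Qed.

Lemma mean_mscale2 (A B : Mat) : mscale (/ 2) (madd (mscale 2 A) (mscale 2 B)) = madd A B.
Proof.
apply functional_extensionality; intro i; apply functional_extensionality; intro j.
unfold mscale, madd; field.
Qed.

Theorem proposition2 (n : nat) (A Ainv B Binv : Mat) :
  (1 <= n)%nat -> SPD n A -> SPD n B ->
  is_inverse n A Ainv -> is_inverse n B Binv ->
  exists NA NB ip : R,
    (* NA = ||f_A||_{L^2}^2, NB = ||f_B||_{L^2}^2 *)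
    integral_Rn n (fun x => gauss n A Ainv x ^ 2) NA /\ 0 < NA /\
    integral_Rn n (fun x => gauss n B Binv x ^ 2) NB /\ 0 < NB /\
    (* ip = < Phi(A), Phi(B) >_{L^2} *)
    integral_Rn n (fun x => (gauss n A Ainv x / sqrt NA) *
                            (gauss n B Binv x / sqrt NB)) ip /\
    ip <> 0 /\
    stein n (mscale 2 A) (mscale 2 B) = dS_of_inner ip.
Proof.
intros _ HA HB HAi HBi.
set (NA := gauss_inner n A A); set (NB := gauss_inner n B B).
assert (HNA : 0 < NA) by (apply gauss_inner_pos; auto).
assert (HNB : 0 < NB) by (apply gauss_inner_pos; auto).
assert (0 < sqrt NA) by (apply sqrt_lt_R0; auto).
assert (0 < sqrt NB) by (apply sqrt_lt_R0; auto).
set (ip := / (sqrt NA * sqrt NB) * gauss_inner n A B).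
assert (Hip : 0 < ip).
{ apply Rmult_lt_0_compat;
    [apply Rinv_0_lt_compat, Rmult_lt_0_compat | apply gauss_inner_pos]; auto. }
exists NA, NB, ip; repeat split; auto; try lra.
- rewrite <- (Rmult_1_l NA).
  apply integral_Rn_ext with (2 := integral_gauss_product n A Ainv A Ainv 1 HA HA HAi HAi).
  intro x; ring.
- rewrite <- (Rmult_1_l NB).
  apply integral_Rn_ext with (2 := integral_gauss_product n B Binv B Binv 1 HB HB HBi HBi).
  intro x; ring.
- apply integral_Rn_ext with (2 := integral_gauss_product n A Ainv B Binv _ HA HB HAi HBi).
  intro x; field; lra.
- apply stein_eq_dS_of_inner; rewrite ?mean_mscale2, ?mscale2_madd.
  + apply det_SPD_pos, SPD_madd; auto.
  + apply det_SPD_pos, SPD_madd; auto.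
  + apply det_SPD_pos, SPD_madd; auto.
  + rewrite <- gauss_inner_ratio by auto; unfold ip; fold NA NB.
    replace (NA * NB) with ((sqrt NA * sqrt NB) ^ 2)
      by (rewrite Rpow_mult_distr, !pow2_sqrt by lra; reflexivity).
    field; lra.
Qed.
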